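(* Let $G$ be a connected graph with $n$ vertices, $m$ edges, chromatic number $\chi$ and independence number $\theta$. If $0\leq \alpha < 1$, then $$S_{\chi}(A_{\alpha}(G))\geq \frac{2\alpha m}{\theta}.$$
   Context: All graphs are simple and undirected. $A_{\alpha}(G)=\alpha D(G)+(1-\alpha)A(G)$, where $A(G)$ is the adjacency matrix and $D(G)$ the diagonal degree matrix. For a real symmetric matrix $M$ with eigenvalues $\lambda_1(M)\geq\cdots\geq\lambda_n(M)$, $S_k(M)=\sum_{i=1}^k\lambda_i(M)$. The independence number is the maximum size of a set of pairwise non-adjacent vertices. *)

From HB Require Import structures.
From mathcomp Require Import all_boot all_order all_algebra.
From mathcomp Require Import polyrcf.
Set Implicit Arguments. Unset Strict Implicit. Unset Printing Implicit Defensive.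
Import Order.TTheory GRing.Theory Num.Theory.
Local Open Scope ring_scope.

(* For a real symmetric matrix the characteristic polynomial splits over R,
   so this list has exactly n entries. *)
Definition eigenvalues (R : rcfType) (n : nat) (M : 'M[R]_n) : seq R :=
  sort (fun x y : R => y <= x)
    (flatten [seq nseq (mup x (char_poly M)) x | x <- rootsR (char_poly M)]).

Definition S_k (R : rcfType) (n : nat) (k : nat) (M : 'M[R]_n) : R :=
  \sum_(i < k) (eigenvalues M)`_i.

Definition simple_graph (T : finType) (e : rel T) : Prop :=
  symmetric e /\ irreflexive e.

Definition connected_graph (T : finType) (e : rel T) : Prop :=
  forall x y : T, connect e x y.

(* number of edges: unordered adjacent pairs = ordered pairs / 2 *)
Definition num_edges (T : finType) (e : rel T) : nat :=
  (#|[set p : T * T | e p.1 p.2]|)./2.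

Definition degree (T : finType) (e : rel T) (x : T) : nat :=
  #|[set y | e x y]|.

Definition independent (T : finType) (e : rel T) (S : {set T}) : bool :=
  [forall x in S, forall y in S, ~~ e x y].

Definition independence_number (T : finType) (e : rel T) : nat :=
  \max_(S : {set T} | independent e S) #|S|.

Definition proper_colorable (T : finType) (e : rel T) (k : nat) : bool :=
  [exists c : {ffun T -> 'I_k}, [forall x, forall y, e x y ==> (c x != c y)]].

(* chromatic number: least k admitting a proper k-colouring
   (#|T| colours always suffice, so the minimum is over 0..#|T|) *)
Definition chromatic_number (T : finType) (e : rel T) : nat :=
  \big[minn/#|T|]_(k < #|T|.+1 | proper_colorable e k) k.

Definition adjacency_mx (R : nzRingType) (T : finType) (e : rel T)
  : 'M[R]_#|T| :=
  \matrix_(i, j) (e (enum_val i) (enum_val j))%:R.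

Definition degree_mx (R : nzRingType) (T : finType) (e : rel T)
  : 'M[R]_#|T| :=
  \matrix_(i, j) ((degree e (enum_val i))%:R *+ (i == j)).

Definition A_alpha (R : nzRingType) (T : finType) (e : rel T) (alpha : R)
  : 'M[R]_#|T| :=
  alpha *: degree_mx R e + (1 - alpha) *: adjacency_mx R e.

(* The eigenvalues of the symmetric matrix A_alpha(G) are real, and their sum is
   its trace alpha * sum_v deg v = 2 alpha m.  Listed in non-increasing order,
   the mean of the chi largest ones is at least the mean of all n of them, so
   S_chi >= (chi / n) 2 alpha m.  Finally the colour classes of a proper
   chi-colouring are independent sets, whence n <= chi theta. *)
From mathcomp Require Import all_boot all_order all_algebra.
From mathcomp Require Import polyrcf complex lra.
Set Implicit Arguments. Unset Strict Implicit. Unset Printing Implicit Defensive.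
Import Order.TTheory GRing.Theory Num.Theory.
Local Open Scope ring_scope.

Lemma char_poly_conj (R : comUnitRingType) n (P A : 'M[R]_n) :
  P \in unitmx -> char_poly (invmx P *m A *m P) = char_poly A.
Proof.
move=> Pu; rewrite /char_poly /char_poly_mx.
set f := map_mx (@polyC R).
have eX : 'X%:M = f (invmx P) *m 'X%:M *m f P.
  by rewrite mul_mx_scalar -scalemxAl -map_mxM mulVmx // /f map_mx1 scalemx1.
rewrite {1}eX /f !map_mxM -mulmxBl -mulmxBr !det_mulmx mulrC mulrA -det_mulmx.
by rewrite -map_mxM mulmxV // map_mx1 det1 mul1r.
Qed.

(* Pass to [R[i]], where the spectral theorem for Hermitian matrices applies. *)
Lemma sym_char_poly_split (R : rcfType) n (A : 'M[R]_n) : A^T = A ->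
  exists2 rs : seq R, size rs = n & char_poly A = \prod_(r <- rs) ('X - r%:P).
Proof.
move=> Asym; pose f := real_complex R; pose AC := map_mx f A.
have AH : AC \is hermsymmx.
  apply/(is_hermitianmxP false (@Num.conj _)); rewrite expr0 scale1r.
  apply/matrixP => i j; rewrite !mxE conj_Creal ?complex_real //.
  by rewrite -{1}Asym mxE.
have /orthomx_spectralP AE := hermitian_normalmx AH.
have /mxOverP dreal := hermitian_spectral_diag_real AH.
set P := spectralmx AC in AE; set d := spectral_diag AC in AE dreal.
exists [seq complex.Re (d 0 i) | i <- enum 'I_n].
  by rewrite size_map size_enum_ord.
apply: (@map_poly_inj _ _ f).
rewrite map_char_poly -/AC AE char_poly_conj ?spectral_unit //.
rewrite char_poly_trig ?diag_mx_is_trig // rmorph_prod big_map big_enum /=.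
apply: eq_bigr => i _; rewrite mxE eqxx mulr1n rmorphB /= map_polyX map_polyC /=.
by rewrite RRe_real // dreal.
Qed.

Lemma perm_mup_rootsR_prod_XsubC (R : rcfType) (rs : seq R)
    (p := \prod_(r <- rs) ('X - r%:P)) :
  perm_eq (flatten [seq nseq (mup x p) x | x <- rootsR p]) rs.
Proof.
have pn0 : p != 0 by rewrite monic_neq0 // monic_prod_XsubC.
apply/allP => x _ /=; apply/eqP.
rewrite count_flatten -map_comp sumnE big_map /= -mu_prod_XsubC -/p.
rewrite (eq_bigr (fun y => if y == x then mup x p else 0)%N); last first.
  move=> y _; rewrite /= count_nseq /= eq_sym.
  by case: eqP => [->|]; rewrite ?mul1n ?mul0n.
rewrite -big_mkcond big_const_seq iter_addn_0 count_uniq_mem ?uniq_roots //.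
case: (boolP (x \in rootsR p)) => xp; first by rewrite muln1.
rewrite muln0; apply/esym/mupNroot; apply: contraNN xp => rx.
by rewrite -(roots_on_rootsR pn0) rx andbT in_itv.
Qed.

Section SymmetricSpectrum.

Variables (R : rcfType) (n : nat) (A : 'M[R]_n).
Hypothesis Asym : A^T = A.

Lemma perm_eigenvalues_sym :
  exists2 rs : seq R, perm_eq (eigenvalues A) rs &
    char_poly A = \prod_(r <- rs) ('X - r%:P).
Proof.
have [rs _ chA] := sym_char_poly_split Asym.
exists rs => //; rewrite /eigenvalues perm_sort chA.
exact: perm_mup_rootsR_prod_XsubC.
Qed.

Lemma size_eigenvalues_sym : size (eigenvalues A) = n.
Proof.
have [rs /perm_size -> chA] := perm_eigenvalues_sym.
by rewrite -[n]succnK -(size_char_poly A) chA size_prod_XsubC.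
Qed.

Lemma sum_eigenvalues_sym : \sum_(x <- eigenvalues A) x = \tr A.
Proof.
have [rs pe chA] := perm_eigenvalues_sym.
have szrs : size rs = n by rewrite -(perm_size pe) size_eigenvalues_sym.
rewrite (perm_big _ pe) /=; case: n A chA szrs => [|n'] B chB szrs.
  by rewrite (size0nil szrs) big_nil /mxtrace big_ord0.
rewrite -[RHS]opprK -char_poly_trace // chB -szrs coefPn_prod_XsubC ?szrs //.
by rewrite opprK.
Qed.

End SymmetricSpectrum.

Lemma sorted_prefix_mean_ge (R : numDomainType) (s : seq R) k :
  sorted >=%R s -> (k <= size s)%N ->
  k%:R * \sum_(i < size s) s`_i <= (size s)%:R * \sum_(i < k) s`_i.
Proof.
move=> s_sorted kN; set N := size s.
have head_ge_tail i j : (i < k)%N -> (k <= j < N)%N -> s`_j <= s`_i.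
  move=> ik /andP[kj jN].
  apply: (sorted_leq_nth ge_trans lexx 0 s_sorted); rewrite ?inE //.
  - by rewrite (leq_trans ik (leq_trans kj (ltnW jN))).
  - by rewrite ltnW // (leq_trans ik kj).
rewrite -!(big_mkord xpredT (fun i => s`_i)) (big_cat_nat (leq0n k) kN) /=.
set top := \sum_(0 <= i < k) s`_i; set bot := \sum_(k <= i < N) s`_i.
have tail_le_head : k%:R * bot <= (N - k)%:R * top.
  have -> : k%:R * bot = \sum_(0 <= i < k) bot.
    by rewrite sumr_const_nat subn0 mulr_natl.
  rewrite mulr_natl -sumrMnl; apply: ler_sum_nat => i /andP[_ ik].
  rewrite -sumr_const_nat; apply: ler_sum_nat => j kjN; exact: head_ge_tail.
have -> : N%:R = k%:R + (N - k)%:R :> R by rewrite -natrD subnKC.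
by rewrite mulrDr mulrDl lerD2l.
Qed.

Lemma S_k_sym_ge_mean (R : rcfType) n k (A : 'M[R]_n) : A^T = A -> (k <= n)%N ->
  k%:R * \tr A <= n%:R * S_k k A.
Proof.
move=> Asym kn; have szA := size_eigenvalues_sym Asym.
have eig_sorted : sorted >=%R (eigenvalues A).
  by apply: sort_sorted => x y; apply: le_total.
have := sorted_prefix_mean_ge eig_sorted; rewrite szA => /(_ k kn).
by rewrite -sum_eigenvalues_sym // (big_nth 0) szA big_mkord.
Qed.

Section GraphInvariants.

Variables (T : finType) (e : rel T).
Hypothesis e_irr : irreflexive e.

Lemma proper_colorable_card : proper_colorable e #|T|.
Proof.
apply/existsP; exists [ffun x => enum_rank x].
apply/forallP => x; apply/forallP => y; apply/implyP => exy.
rewrite !ffunE (inj_eq enum_rank_inj); apply: contraTneq exy => ->.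
by rewrite e_irr.
Qed.

Lemma chromatic_number_colorable : proper_colorable e (chromatic_number e).
Proof.
apply: (big_ind (proper_colorable e)) => [|a b|//].
  exact: proper_colorable_card.
by rewrite /minn; case: ifP.
Qed.

Lemma chromatic_number_le_card : (chromatic_number e <= #|T|)%N.
Proof.
apply: (big_ind (fun k => k <= #|T|)%N) => // [a b aT _|i _].
  by rewrite geq_min aT.
by rewrite -ltnS.
Qed.

Lemma independence_number_gt0 : (0 < #|T|)%N -> (0 < independence_number e)%N.
Proof.
case/card_gt0P=> x _.
have indx : independent e [set x].
  by apply/forall_inP => y /set1P ->; apply/forall_inP => z /set1P ->; rewrite e_irr.
rewrite -(cards1 x).
exact: (leq_bigmax_cond (F := fun S : {set T} => #|S|) _ indx).
Qed.

Lemma card_le_chromatic_mul_independence :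
  (#|T| <= chromatic_number e * independence_number e)%N.
Proof.
have /existsP[c /forallP c_proper] := chromatic_number_colorable.
have class_indep k : independent e [set x | c x == k].
  apply/forall_inP => x; rewrite inE => /eqP cx.
  apply/forall_inP => y; rewrite inE => /eqP cy.
  by apply/negP => /(implyP (forallP (c_proper x) y)); rewrite cx cy eqxx.
rewrite -sum1_card (partition_big c xpredT) //=.
rewrite -[X in (_ <= X * _)%N]card_ord -sum_nat_const; apply: leq_sum => k _.
have -> : (\sum_(x | c x == k) 1 = #|[set x | c x == k]|)%N.
  by rewrite -sum1_card; apply: eq_bigl => x; rewrite inE.
exact: (leq_bigmax_cond (F := fun S : {set T} => #|S|) _ (class_indep k)).
Qed.

Lemma sum_degree : (\sum_x degree e x)%N = #|[set p : T * T | e p.1 p.2]|.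
Proof.
rewrite -sum1_card.
under eq_bigr => x _ do rewrite /degree -sum1_card big_mkcond.
by rewrite pair_big [RHS]big_mkcond; apply: eq_bigr => -[x y] _; rewrite !inE.
Qed.

Lemma num_edges_double_le :
  ((num_edges e).*2 <= #|[set p : T * T | e p.1 p.2]|)%N.
Proof. by rewrite /num_edges -[X in (_ <= X)%N]odd_double_half leq_addl. Qed.

End GraphInvariants.

Lemma tr_A_alpha (R : nzRingType) (T : finType) (e : rel T) (alpha : R) :
  irreflexive e ->
  \tr (A_alpha e alpha) = alpha * #|[set p : T * T | e p.1 p.2]|%:R.
Proof.
move=> e_irr; rewrite /mxtrace -sum_degree natr_sum mulr_sumr.
rewrite (reindex (@enum_rank T)) /=; last first.
  by exists enum_val => x _; rewrite ?enum_rankK ?enum_valK.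
by apply: eq_bigr => x _; rewrite !mxE eqxx mulr1n enum_rankK e_irr mulr0 addr0.
Qed.

Lemma A_alpha_sym (R : nzRingType) (T : finType) (e : rel T) (alpha : R) :
  symmetric e -> (A_alpha e alpha)^T = A_alpha e alpha.
Proof.
move=> e_sym; apply/matrixP => i j; rewrite !mxE e_sym.
by case: (eqVneq i j) => [->|ne]; rewrite ?eqxx // eq_sym (negbTE ne).
Qed.

Theorem corollary5p3 (R : rcfType) (T : finType) (e : rel T) (alpha : R) :
  simple_graph e -> (0 < #|T|)%N -> connected_graph e ->
  0 <= alpha -> alpha < 1 ->
  S_k (chromatic_number e) (A_alpha e alpha) >=
    2 * alpha * (num_edges e)%:R / (independence_number e)%:R.
Proof.
move=> [e_sym e_irr] T_gt0 _ alpha_ge0 _.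
set chi := chromatic_number e; set theta := independence_number e.
set arcs := #|[set p : T * T | e p.1 p.2]|.
have mean_le :=
  S_k_sym_ge_mean (A_alpha_sym alpha e_sym) (chromatic_number_le_card e).
rewrite tr_A_alpha // -/chi -/arcs in mean_le.
have n_le : (#|T| <= chi * theta)%N := card_le_chromatic_mul_independence e_irr.
have theta_gt0 : (0 < theta)%N := independence_number_gt0 e_irr T_gt0.
have edges_le : 2 * alpha * (num_edges e)%:R <= alpha * arcs%:R.
  rewrite [2 * _]mulrC -mulrA ler_wpM2l // -natrM ler_nat mul2n.
  exact: num_edges_double_le.
rewrite ler_pdivrMr ?ltr0n //; apply: le_trans edges_le _.
have theta_pos : 0 < theta%:R :> R by rewrite ltr0n.
have n_pos : 0 < #|T|%:R :> R by rewrite ltr0n.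
have tr_ge0 : 0 <= alpha * arcs%:R by rewrite mulr_ge0.
move: n_le; rewrite -(ler_nat R) natrM => n_le.
nra.
Qed.
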